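(* Let $k, n \in \mathbb{N}$ with $k \le 2n$. Color every edge of the complete bipartite graph $K_{2n,2n}$ either red or blue in such a way that every vertex is incident with exactly $n$ red edges and exactly $n$ blue edges. Then $K_{2n,2n}$ has a perfect matching consisting of exactly $k$ red edges and $2n-k$ blue edges, unless $k$ is odd and the graph of blue edges is isomorphic to $K_{n,n} \cup K_{n,n}$ (the disjoint union of two copies of $K_{n,n}$).
   Context: The graph of blue edges is the spanning subgraph of $K_{2n,2n}$ on all $4n$ vertices whose edge set is the set of blue edges. *)

From mathcomp Require Import all_boot all_fingroup.
Set Implicit Arguments. Unset Strict Implicit. Unset Printing Implicit Defensive.

(* A red/blue colouring of K_{2n,2n}: left vertices 'I_(2n), right vertices
   'I_(2n); [col i j = true] iff the edge {left i, right j} is RED,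
   [col i j = false] iff it is BLUE. *)
Definition coloring (n : nat) := 'I_(2 * n) -> 'I_(2 * n) -> bool.

Definition balanced (n : nat) (col : coloring n) : Prop :=
  (forall i : 'I_(2 * n), #|[set j | col i j]| = n /\ #|[set j | ~~ col i j]| = n) /\
  (forall j : 'I_(2 * n), #|[set i | col i j]| = n /\ #|[set i | ~~ col i j]| = n).

Definition KV (n : nat) : finType := ('I_(2 * n) + 'I_(2 * n))%type.

Definition blue_adj (n : nat) (col : coloring n) (x y : KV n) : bool :=
  match x, y with
  | inl i, inr j => ~~ col i j
  | inr j, inl i => ~~ col i j
  | _, _ => false
  end.

(* K_{n,n} ∪ K_{n,n}: vertices (b, inl a) / (b, inr a), b : bool selecting the
   copy; adjacent iff same copy and opposite sides. *)
Definition TV (n : nat) : finType := (bool * ('I_n + 'I_n))%type.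

Definition twoKnn_adj (n : nat) (x y : TV n) : bool :=
  (x.1 == y.1) &&
  match x.2, y.2 with
  | inl _, inr _ => true
  | inr _, inl _ => true
  | _, _ => false
  end.

Definition blue_iso_twoKnn (n : nat) (col : coloring n) : Prop :=
  exists f : KV n -> TV n, bijective f /\
    forall x y : KV n, twoKnn_adj (f x) (f y) = blue_adj col x y.

(* a perfect matching of K_{2n,2n} is a bijection s (left i matched to right s i);
   its number of red edges *)
Definition red_count (n : nat) (col : coloring n) (s : 'S_(2 * n)) : nat :=
  #|[set i | col i (s i)]|.

Definition blue_count (n : nat) (col : coloring n) (s : 'S_(2 * n)) : nat :=
  #|[set i | ~~ col i (s i)]|.

From mathcomp Require Import all_boot all_fingroup zify.
Set Implicit Arguments. Unset Strict Implicit. Unset Printing Implicit Defensive.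

(* A perfect matching is a permutation s, with red count sum_i col i (s i);
   relabelling columns makes s the identity.  If no matching has exactly one
   more red edge than s, then no cyclic permutation of the columns gains
   exactly one red edge on the diagonal.  Played against the row and column
   sums n, these constraints for cycles of length 2, 3 and 4 force
   col i j = (a i != c j) for some a, c, i.e. the blue graph is two disjoint
   copies of K_{n,n}; then swapping a suitable pair gains two red edges.  In that
   case every red count is even, since each class of a and of c has n
   elements.  So from any red count below 2n one can climb by one, or by two
   in the exceptional case, and complementing the colours climbs down. *)

Lemma card_set_sum (T : finType) (P : pred T) : #|[set x | P x]| = \sum_x (P x : nat).
Proof. by rewrite -sum1dep_card big_mkcond /=; apply: eq_bigr => x _; case: (P x). Qed.

Lemma sum_le1_eq_card (T : finType) (E : T -> nat) :
  (forall x, E x <= 1) -> \sum_x E x = #|T| -> forall x, E x = 1.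
Proof.
move=> E_le1 sumE x; apply/eqP.
have /leqif_sum : forall y, xpredT y -> E y <= 1 ?= iff (E y == 1) by move=> y _; split.
rewrite sum_nat_const muln1 sumE => -[_ /esym]; rewrite eqxx => /forallP; exact.
Qed.

Lemma next_inj (T : eqType) (s : seq T) : uniq s -> injective (next s).
Proof. by move=> s_uniq; apply: can_inj (prev_next s_uniq). Qed.

Definition cycle_perm (T : finType) (s : seq T) (s_uniq : uniq s) : {perm T} :=
  perm (next_inj s_uniq).

Definition set_rank (T : finType) (A : {set T}) k (x : T) : 'I_k.+1 :=
  inord (index x (enum A)).

Lemma set_rank_inj (T : finType) (A : {set T}) k :
  #|A| = k.+1 -> {in A &, injective (set_rank A k)}.
Proof.
move=> cardA x y xA yA /(congr1 val) /=.
have index_lt z : z \in A -> index z (enum A) < k.+1.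
  by move=> zA; rewrite -cardA cardE index_mem mem_enum.
rewrite !inordK ?index_lt // => /(congr1 (nth x (enum A))).
by rewrite !nth_index ?mem_enum.
Qed.

Lemma red_countE n (col : coloring n) s : red_count col s = \sum_i (col i (s i) : nat).
Proof. exact: card_set_sum. Qed.

Lemma red_count_le n (col : coloring n) s : red_count col s <= 2 * n.
Proof. by rewrite -[X in _ <= X]card_ord max_card. Qed.

Lemma red_add_blue n (col : coloring n) s : red_count col s + blue_count col s = 2 * n.
Proof.
rewrite /red_count /blue_count -[RHS]card_ord -(cardsC [set i | col i (s i)]).
by congr (_ + _); apply: eq_card => i; rewrite !inE.
Qed.

Lemma red_count_cycle_perm n (col : coloring n) s (s_uniq : uniq s) :
  red_count col (cycle_perm s_uniq) + \sum_(x <- s) (col x x : nat) =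
  red_count col 1%g + \sum_(x <- s) (col x (next s x) : nat).
Proof.
rewrite !red_countE (bigID (mem s)) [in RHS](bigID (mem s)) /= !big_uniq //.
have -> : \sum_(i | i \notin s) (col i (cycle_perm s_uniq i) : nat) =
          \sum_(i | i \notin s) (col i ((1%g : 'S_(2 * n)) i) : nat).
  by apply: eq_bigr => i /negbTE i_out; rewrite perm1 permE next_nth i_out.
have -> : \sum_(i in s) (col i (cycle_perm s_uniq i) : nat) =
          \sum_(i in s) (col i (next s i) : nat).
  by apply: eq_bigr => i _; rewrite permE.
have -> : \sum_(i in s) (col i ((1%g : 'S_(2 * n)) i) : nat) = \sum_(i in s) (col i i : nat).
  by apply: eq_bigr => i _; rewrite perm1.
by rewrite addnC addnA [RHS]addnAC.
Qed.

Lemma balanced_sums n (col : coloring n) : balanced col ->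
  (forall i, \sum_j (col i j : nat) = n) /\ (forall j, \sum_i (col i j : nat) = n).
Proof.
by case=> rows cols; split=> x; rewrite -card_set_sum; [case: (rows x) | case: (cols x)].
Qed.

Definition achievable n (col : coloring n) k := exists s : 'S_(2 * n), red_count col s = k.

(* The blue edges are the pairs with a i = c j: the blue graph is the disjoint
   union of the complete bipartite graphs on {a = false} + {c = false} and on
   {a = true} + {c = true}. *)
Definition xor_coloring n (col : coloring n) :=
  exists a c : 'I_(2 * n) -> bool, forall i j, col i j = (a i != c j).

Section NoUnitGain.

Variables (n : nat) (N : coloring n).
Hypothesis row_sum : forall i, \sum_j (N i j : nat) = n.
Hypothesis col_sum : forall j, \sum_i (N i j : nat) = n.
Hypothesis no_unit_gain : forall p : 'S_(2 * n), red_count N p != (red_count N 1%g).+1.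

Lemma cycle_gain_neq1 s : uniq s ->
  \sum_(x <- s) (N x (next s x) : nat) != (\sum_(x <- s) (N x x : nat)).+1.
Proof.
move=> s_uniq; apply: contra (no_unit_gain (cycle_perm s_uniq)) => /eqP gain1.
by rewrite -(eqn_add2r (\sum_(x <- s) (N x x : nat))) red_count_cycle_perm gain1 addnS addSn.
Qed.

Lemma two_cycle_gain x y : x != y -> N x y + N y x != (N x x + N y y).+1.
Proof.
move=> xy; have := @cycle_gain_neq1 [:: x; y].
by rewrite /= inE xy !big_cons !big_nil /= eqxx (ifN_eqC _ _ xy) eqxx !addn0; apply.
Qed.

Lemma three_cycle_gain x y z : x != y -> x != z -> y != z ->
  N x y + N y z + N z x != (N x x + N y y + N z z).+1.
Proof.
move=> xy xz yz; have := @cycle_gain_neq1 [:: x; y; z].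
rewrite /= !inE !negb_or xy xz yz !big_cons !big_nil /= eqxx.
by rewrite (ifN_eqC _ _ xy) (ifN_eqC _ _ xz) (ifN_eqC _ _ yz) !eqxx !addn0 !addnA; apply.
Qed.

Lemma four_cycle_gain x y z w :
  x != y -> x != z -> x != w -> y != z -> y != w -> z != w ->
  N x y + N y z + N z w + N w x != (N x x + N y y + N z z + N w w).+1.
Proof.
move=> xy xz xw yz yw zw; have := @cycle_gain_neq1 [:: x; y; z; w].
rewrite /= !inE !negb_or xy xz xw yz yw zw !big_cons !big_nil /= eqxx.
rewrite (ifN_eqC _ _ xy) (ifN_eqC _ _ xz) (ifN_eqC _ _ yz) (ifN_eqC _ _ xw).
by rewrite (ifN_eqC _ _ yw) (ifN_eqC _ _ zw) !eqxx !addn0 !addnA; apply.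
Qed.

(* Once the relevant cycle constraints are in the goal, what remains is a
   tautology in finitely many entries of N: check all their values. *)
Ltac entry_cases :=
  repeat match goal with |- context[N ?a ?b] => case: (N a b) end; done.

Lemma neq_diag x y : N x x -> N y y = false -> x != y.
Proof. by move=> Nxx; apply: contraFneq => <-. Qed.

Lemma blue_diag_sym x y : N x x = false -> N y y = false -> N x y = N y x.
Proof.
move=> Nxx Nyy; have [-> //|xy] := eqVneq x y.
by move: (two_cycle_gain xy); rewrite Nxx Nyy; entry_cases.
Qed.

Lemma no_red_triangle x y z : N x x = false -> N y y = false -> N z z = false ->
  x != y -> x != z -> y != z -> N x y -> N y z -> N x z -> False.
Proof.
move=> Nxx Nyy Nzz xy xz yz Nxy Nyz Nxz.
have Nyx : N y x by rewrite (blue_diag_sym Nyy Nxx).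
have Nzy : N z y by rewrite (blue_diag_sym Nzz Nyy).
have Nzx : N z x by rewrite (blue_diag_sym Nzz Nxx).
have [/existsP [i Nii] | /existsPn all_blue] := boolP [exists i, N i i].
  (* the 4-cycle (i x y z) and the 3-cycles through i force N i x and N x i to be
     red, against the 2-cycle (i x) *)
  have ix := neq_diag Nii Nxx; have iy := neq_diag Nii Nyy; have iz := neq_diag Nii Nzz.
  have zy : z != y by rewrite eq_sym.
  have zx : z != x by rewrite eq_sym.
  move: (three_cycle_gain ix iy xy) (three_cycle_gain iz iy zy).
  move: (three_cycle_gain iz ix zx) (three_cycle_gain ix iz xz).
  move: (two_cycle_gain ix) (four_cycle_gain ix iy iz xy xz yz).
  by rewrite Nii Nxx Nyy Nzz ?Nxy ?Nyz ?Nxz ?Nyx ?Nzy ?Nzx; entry_cases.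
have Nll l : N l l = false by apply/negbTE/all_blue.
(* column l has two red entries in rows x, y, z, so these rows sum to 4n <= 3n *)
have two_le l : 2 <= N x l + N y l + N z l.
  have [->|lx] := eqVneq l x; first by rewrite Nxx Nyx Nzx.
  have [->|ly] := eqVneq l y; first by rewrite Nyy Nxy Nzy.
  have [->|lz] := eqVneq l z; first by rewrite Nzz Nxz Nyz.
  have xl : x != l by rewrite eq_sym.
  have yl : y != l by rewrite eq_sym.
  move: (three_cycle_gain xl xy ly) (three_cycle_gain xl xz lz) (three_cycle_gain yl yz lz).
  rewrite (blue_diag_sym (Nll l) Nyy) (blue_diag_sym (Nll l) Nzz).
  by rewrite !Nll ?Nxy ?Nyz ?Nxz ?Nyx ?Nzx ?Nzy; entry_cases.
have : \sum_(l < 2 * n) 2 <= \sum_l (N x l + N y l + N z l).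
  by apply: leq_sum => l _; apply: two_le.
rewrite sum_nat_const card_ord !big_split /= !row_sum => le_4n_3n.
by move: le_4n_3n (leq_ltn_trans (leq0n x) (ltn_ord x)); clear; lia.
Qed.

Lemma red_two_cycle_exists g : N g g = false -> exists h, N g h && N h g.
Proof.
move=> Ngg; apply/existsP; apply: contraT => /existsPn no_h.
have le1 l : N g l + N l g <= 1 by move: (no_h l); case: (N g l); case: (N l g).
have sum2n : \sum_l (N g l + N l g) = #|'I_(2 * n)|.
  by rewrite big_split /= row_sum col_sum card_ord addnn -mul2n.
by have := sum_le1_eq_card le1 sum2n g; rewrite Ngg.
Qed.

Section RedTwoCycle.

Variables g h : 'I_(2 * n).
Hypotheses (Ngg : N g g = false) (Ngh : N g h) (Nhg : N h g).

Lemma red_two_cycle_neq : g != h.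
Proof. by apply: contraTneq Ngh => <-; rewrite Ngg. Qed.

Lemma red_two_cycle_diag : N h h = false.
Proof.
apply/negbTE/negP => Nhh.
by have := two_cycle_gain (neq_diag Nhh Ngg); rewrite Nhh Ngg Ngh Nhg.
Qed.

Lemma red_two_cycle_swap : exists p, red_count N p = (red_count N 1%g).+2.
Proof.
have gh := red_two_cycle_neq; have gh_uniq : uniq [:: g; h] by rewrite /= inE gh.
exists (cycle_perm gh_uniq); have := red_count_cycle_perm N gh_uniq.
rewrite !big_cons !big_nil /= (ifN_eqC _ _ gh) !eqxx Ngg red_two_cycle_diag Ngh Nhg.
by rewrite !addn0 addn2.
Qed.

Lemma red_two_cycle_rows_compl j : N h j = ~~ N g j.
Proof.
have gh := red_two_cycle_neq; have Nhh := red_two_cycle_diag.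
suff /(_ j) : forall j, N g j + N h j = 1 by case: (N h j); case: (N g j).
apply: sum_le1_eq_card => [{}j|]; last first.
  by rewrite big_split /= !row_sum card_ord addnn -mul2n.
have [->|jg] := eqVneq j g; first by rewrite Ngg Nhg.
have [->|jh] := eqVneq j h; first by rewrite Nhh Ngh.
case Njj: (N j j).
  have jg' := neq_diag Njj Ngg; have jh' := neq_diag Njj Nhh.
  move: (two_cycle_gain jg') (three_cycle_gain jg' jh' gh).
  by rewrite Njj Ngg Nhh ?Ngh ?Nhg; entry_cases.
have gj : g != j by rewrite eq_sym.
have hj : h != j by rewrite eq_sym.
case Ngj: (N g j); case Nhj: (N h j) => //; exfalso.
exact: (no_red_triangle Ngg Nhh Njj gh gj hj Ngh Nhj Ngj).
Qed.

Lemma red_two_cycle_xor i j : N i j = (N i g != N g j).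
Proof.
have gh := red_two_cycle_neq; have hg : h != g by rewrite eq_sym.
have Nhh := red_two_cycle_diag; have Nh := red_two_cycle_rows_compl.
case Nii: (N i i); case Njj: (N j j).
- have ig := neq_diag Nii Ngg; have ih := neq_diag Nii Nhh.
  have jg := neq_diag Njj Ngg; have jh := neq_diag Njj Nhh.
  move: (three_cycle_gain ig ih gh) (three_cycle_gain jg jh gh) (three_cycle_gain jh jg hg).
  have [<-|ij] := eqVneq i j; first by rewrite Nii Ngg Nhh ?Ngh ?Nhg !Nh; entry_cases.
  move: (three_cycle_gain ij ih jh) (three_cycle_gain ij ig jg).
  move: (four_cycle_gain ij ig ih jg jh gh) (four_cycle_gain ij ih ig jh jg hg).
  by rewrite Nii Njj Ngg Nhh ?Ngh ?Nhg !Nh; entry_cases.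
- have ig := neq_diag Nii Ngg; have ih := neq_diag Nii Nhh.
  have [->|jg] := eqVneq j g; first by rewrite Ngg; entry_cases.
  move: (three_cycle_gain ig ih gh) (three_cycle_gain ih ig hg).
  have [->|jh] := eqVneq j h; first by rewrite Nii Ngg Nhh ?Ngh ?Nhg !Nh; entry_cases.
  move: (three_cycle_gain (neq_diag Nii Njj) ig jg) (three_cycle_gain (neq_diag Nii Njj) ih jh).
  move: (blue_diag_sym Njj Ngg) (blue_diag_sym Njj Nhh).
  by rewrite Nii Njj Ngg Nhh ?Ngh ?Nhg !Nh; entry_cases.
- have jg := neq_diag Njj Ngg; have jh := neq_diag Njj Nhh.
  have [->|ig] := eqVneq i g; first by rewrite Ngg; entry_cases.
  have [->|ih] := eqVneq i h; first by rewrite Nh Nhg.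
  have gi : g != i by rewrite eq_sym.
  have hi : h != i by rewrite eq_sym.
  have ji := neq_diag Njj Nii.
  move: (three_cycle_gain jg ji gi) (three_cycle_gain jg jh gh).
  move: (three_cycle_gain jh ji hi) (three_cycle_gain jh jg hg).
  move: (blue_diag_sym Nii Ngg) (blue_diag_sym Nii Nhh).
  by rewrite Nii Njj Ngg Nhh ?Ngh ?Nhg !Nh; entry_cases.
- have [<-|ij] := eqVneq i j; first by rewrite Nii (blue_diag_sym Nii Ngg); case: (N g i).
  have [->|ig] := eqVneq i g; first by rewrite Ngg; entry_cases.
  have [->|jg] := eqVneq j g; first by rewrite Ngg; case: (N i g).
  have no_triangle : ~~ [&& N i j, N j g & N i g].
    by apply/negP => /and3P [Nij Njg Nig]; apply: (no_red_triangle Nii Njj Ngg ij ig jg).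
  move: no_triangle (three_cycle_gain ij ig jg) (blue_diag_sym Nii Ngg) (blue_diag_sym Njj Ngg).
  by rewrite Nii Njj Ngg; entry_cases.
Qed.

End RedTwoCycle.

End NoUnitGain.

Lemma red_count_step n (col : coloring n) s : balanced col -> red_count col s < 2 * n ->
  achievable col (red_count col s).+1 \/
  achievable col (red_count col s).+2 /\ xor_coloring col.
Proof.
move=> /balanced_sums [row_sum col_sum] lt_2n.
pose N : coloring n := fun i j => col i (s j).
have red_countN p : red_count N p = red_count col (p * s)%g.
  by rewrite !red_countE; apply: eq_bigr => i _; rewrite permM.
have red_countN1 : red_count N 1%g = red_count col s by rewrite red_countN mul1g.
have row_sumN i : \sum_j (N i j : nat) = n.
  by rewrite -[RHS](row_sum i) [RHS](reindex_perm s).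
have col_sumN j : \sum_i (N i j : nat) = n := col_sum (s j).
have [g /negbTE Ngg] : exists g, ~~ N g g.
  apply/existsP; apply: contraTT lt_2n => /existsPn all_red.
  rewrite -red_countN1 -leqNgt /red_count -[X in X <= _]card_ord subset_leq_card //.
  by apply/subsetP => i _; rewrite inE perm1; apply/negPn/all_red.
have [/existsP [p /eqP gain1] | /existsPn no_gain1] :=
  boolP [exists p, red_count N p == (red_count N 1%g).+1].
  by left; exists (p * s)%g; rewrite -red_countN gain1 red_countN1.
have {}no_gain1 p : red_count N p != (red_count N 1%g).+1 by apply: no_gain1.
have [h /andP [Ngh Nhg]] := red_two_cycle_exists row_sumN col_sumN Ngg.
right; split.
  have [p gain2] := red_two_cycle_swap no_gain1 Ngg Ngh Nhg.
  by exists (p * s)%g; rewrite -red_countN gain2 red_countN1.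
exists (fun i => N i g), (fun j => N g (s^-1 j)%g) => i j.
by rewrite -(red_two_cycle_xor row_sumN no_gain1 Ngg Ngh Nhg) /N permKV.
Qed.

Lemma xor_class_card n (col : coloring n) (a c : 'I_(2 * n) -> bool) :
  balanced col -> (forall i j, col i j = (a i != c j)) -> 0 < n ->
  forall b, #|[set i | a i == b]| = n /\ #|[set j | c j == b]| = n.
Proof.
move=> [rows cols] colE n_gt0 b.
have x0 : 'I_(2 * n) by exists 0; rewrite muln_gt0.
have [[red_r blue_r] [red_c blue_c]] := (rows x0, cols x0).
split.
  case: b; case Ec: (c x0);
    [rewrite -[RHS]blue_c | rewrite -[RHS]red_c | rewrite -[RHS]red_c | rewrite -[RHS]blue_c];
    by apply: eq_card => i; rewrite !inE colE Ec; case: (a i).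
case: b; case Ea: (a x0);
  [rewrite -[RHS]blue_r | rewrite -[RHS]red_r | rewrite -[RHS]red_r | rewrite -[RHS]blue_r];
  by apply: eq_card => j; rewrite !inE colE Ea; case: (c j).
Qed.

Lemma xor_coloring_red_count_even n (col : coloring n) s :
  balanced col -> xor_coloring col -> ~~ odd (red_count col s).
Proof.
move=> bal [a [c colE]].
have [n0 | n_gt0] := posnP n.
  by move: (red_count_le col s); rewrite [X in _ <= 2 * X]n0 leqn0 => /eqP ->.
have card_true (d : 'I_(2 * n) -> bool) : #|[set i | d i == true]| = \sum_i (d i : nat).
  by rewrite card_set_sum; apply: eq_bigr => i _; rewrite eqb_id.
have [card_a card_c] := xor_class_card bal colE n_gt0 true.
have sum_a : \sum_i (a i : nat) = n by rewrite -card_true card_a.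
have sum_c : \sum_i (c (s i) : nat) = n.
  by rewrite -[RHS]card_c card_true [RHS](reindex_perm s).
have : red_count col s + 2 * \sum_i (a i && c (s i) : nat) = n + n.
  transitivity (\sum_i (a i : nat) + \sum_i (c (s i) : nat)); last by rewrite sum_a sum_c.
  rewrite red_countE big_distrr -!big_split /=.
  by apply: eq_bigr => i _; rewrite colE; case: (a i); case: (c (s i)).
by move/(congr1 odd); rewrite oddD oddM /= addnn odd_double addbF => ->.
Qed.

Lemma blue_iso_xor n (col : coloring n) : blue_iso_twoKnn col -> xor_coloring col.
Proof.
case: n col => [|n] col.
  by move=> _; exists (fun _ => false), (fun _ => false) => -[].
move=> [f [[g fK gK] f_adj]].
exists (fun i => (f (inl i)).1), (fun j => (f (inr j)).1) => i j.
have := f_adj (inl i) (inr j); rewrite /= /twoKnn_adj.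
case fi: (f (inl i)) => [b1 [p|p]]; case fj: (f (inr j)) => [b2 [q|q]] /=;
  rewrite ?andbT ?andbF => blueE; rewrite -[col i j]negbK -blueE //=.
(* f (inl i) and f (inr j) lie on the same side of copy b1; if b2 = b1, the preimage
   of a vertex on the other side would be adjacent to both a left and a right vertex *)
- apply/esym/eqP => b12; have := f_adj (g (b1, inr ord0)) (inl i).
  have := f_adj (g (b1, inr ord0)) (inr j).
  by rewrite gK fi fj -b12 /twoKnn_adj /= eqxx; case: (g _).
- apply/esym/eqP => b12; have := f_adj (g (b1, inl ord0)) (inl i).
  have := f_adj (g (b1, inl ord0)) (inr j).
  by rewrite gK fi fj -b12 /twoKnn_adj /= eqxx; case: (g _).
Qed.

Lemma xor_blue_iso n (col : coloring n) : balanced col -> xor_coloring col -> blue_iso_twoKnn col.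
Proof.
case: n col => [|n] col; last move=> bal [a [c colE]].
  move=> _ _; have KV0 : KV 0 -> False by case=> -[i]; rewrite muln0.
  exists (fun x => match KV0 x with end); split; last by move=> x; case: (KV0 x).
  apply: inj_card_bij => [x|]; first by case: (KV0 x).
  by rewrite /TV /KV card_prod !card_sum !card_ord muln0.
have class_card := xor_class_card bal colE (ltn0Sn n).
pose F (x : KV n.+1) : TV n.+1 := match x with
  | inl i => (a i, inl (set_rank [set i' | a i' == a i] n i))
  | inr j => (c j, inr (set_rank [set j' | c j' == c j] n j)) end.
exists F; split.
  apply: inj_card_bij; last by rewrite !card_prod !card_sum !card_ord card_bool mulnDr.
  move=> [i|j] [i'|j'] //= [class_eq rank_eq]; congr (_ _); rewrite class_eq in rank_eq.
    by apply: set_rank_inj rank_eq; rewrite ?inE ?class_eq //; case: (class_card (a i')).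
  by apply: set_rank_inj rank_eq; rewrite ?inE ?class_eq //; case: (class_card (c j')).
by move=> [i|j] [i'|j']; rewrite /twoKnn_adj /= ?andbF ?andbT ?colE ?negbK // eq_sym.
Qed.

Definition compl_coloring n (col : coloring n) : coloring n := fun i j => ~~ col i j.

Lemma balanced_compl n (col : coloring n) : balanced col -> balanced (compl_coloring col).
Proof.
have negbK_set (T : finType) (P : pred T) : [set x | ~~ ~~ P x] = [set x | P x].
  by apply/setP => x; rewrite !inE negbK.
case=> rows cols; split=> x; rewrite /compl_coloring negbK_set and_comm.
  exact: rows.
exact: cols.
Qed.

Lemma red_count_compl n (col : coloring n) s :
  red_count (compl_coloring col) s = 2 * n - red_count col s.
Proof. by rewrite -(red_add_blue col s) addKn. Qed.

Lemma xor_coloring_compl n (col : coloring n) :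
  xor_coloring (compl_coloring col) <-> xor_coloring col.
Proof.
split=> -[a [c colE]]; exists a, (fun j => ~~ c j) => i j; move: (colE i j);
  by rewrite /compl_coloring; case: (col i j); case: (a i); case: (c j).
Qed.

Lemma achievable_up n (col : coloring n) c k : balanced col -> achievable col c ->
  c <= k <= 2 * n -> (xor_coloring col -> ~~ odd k) -> achievable col k.
Proof.
move=> bal [s <-] /andP [le_sk le_k2n] k_even.
have [d] := ubnP (k - red_count col s); elim: d s le_sk => // d IH s le_sk lt_d.
have [<-|ne_sk] := eqVneq (red_count col s) k; first by exists s.
have lt_sk : red_count col s < k by rewrite ltn_neqAle ne_sk.
have [[t red_t] | [[t red_t] xor_col]] := red_count_step bal (leq_trans lt_sk le_k2n).
  by apply: (IH t); rewrite red_t; move: lt_d lt_sk; clear; lia.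
have ne_k : k != (red_count col s).+1.
  apply: contraNneq (k_even xor_col) => ->.
  by rewrite /= (xor_coloring_red_count_even s bal xor_col).
by apply: (IH t); rewrite red_t; move: lt_d lt_sk ne_k; clear; lia.
Qed.

Lemma achievable_all n (col : coloring n) k : balanced col -> k <= 2 * n ->
  (xor_coloring col -> ~~ odd k) -> achievable col k.
Proof.
move=> bal le_k2n k_even; have [le_1k | lt_k1] := leqP (red_count col 1%g) k.
  by apply: achievable_up bal (ex_intro _ 1%g erefl) _ k_even; rewrite le_1k.
have le_12n := red_count_le col 1%g.
have [s red_s] : achievable (compl_coloring col) (2 * n - k).
  apply: (achievable_up (c := 2 * n - red_count col 1%g) (balanced_compl bal)).
  - by exists 1%g; rewrite red_count_compl.
  - by apply/andP; split; [rewrite leq_sub2l // ltnW | rewrite leq_subr].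
  - by move/xor_coloring_compl/k_even; rewrite oddB // oddM /= .
by exists s; move: red_s (red_count_le col s); rewrite red_count_compl; move: le_k2n; clear; lia.
Qed.

Theorem theorem1 (n k : nat) (col : coloring n) :
  k <= 2 * n -> balanced col ->
  ((exists s : 'S_(2 * n), red_count col s = k /\ blue_count col s = 2 * n - k)
   <-> ~ (odd k /\ blue_iso_twoKnn col)).
Proof.
move=> le_k2n bal; split.
  move=> [s [red_s _]] [odd_k /blue_iso_xor xor_col].
  by have := xor_coloring_red_count_even s bal xor_col; rewrite red_s odd_k.
move=> not_odd_iso.
have k_even : xor_coloring col -> ~~ odd k.
  by move=> xor_col; apply/negP => odd_k; apply: not_odd_iso; split; last exact: xor_blue_iso.
have [s red_s] := achievable_all bal le_k2n k_even.
by exists s; rewrite -red_s -(red_add_blue col s) addKn.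
Qed.
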